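(* Let $q$ be odd, let $C_1,C_2$ be linear codes of length $n$ over $\mathbb{F}_q$ that are both $b$-symbol MDS codes, with $d_b(C_1)\le d_b(C_2)$ and $1\le b\le\min\{\dim C_1,\dim C_2\}$. Let $C=\{[\mathbf{u}+\mathbf{v},\mathbf{u}-\mathbf{v}]:\mathbf{u}\in C_1,\mathbf{v}\in C_2\}\subseteq\mathbb{F}_q^{2n}$. Then $$d_b(C_1)\le d_b(C)\le d_b(C_1)+d_b(C_2)-b.$$
   Context: For $\mathbf{x}\in\mathbb{F}_q^L$ and $1\le b\le L$, $\chi_b(\mathbf{x})=\{i:(x_i,\dots,x_{i+b-1})\ne\mathbf{0}\}$ (indices mod $L$), $w_b(\mathbf{x})=|\chi_b(\mathbf{x})|$, and $d_b(C)=\min_{\mathbf{0}\ne\mathbf{c}\in C}w_b(\mathbf{c})$. An $[n,k]_q$-linear code $C$ is a $b$-symbol MDS code if $d_b(C)=\min\{n-k+b,n\}$. *)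

From HB Require Import structures.
From mathcomp Require Import all_boot all_order all_algebra all_field.
Set Implicit Arguments. Unset Strict Implicit. Unset Printing Implicit Defensive.
Import GRing.Theory.
Local Open Scope ring_scope.

Definition cyc_idx (L : nat) (i : 'I_L) (j : nat) : 'I_L :=
  Ordinal (ltn_pmod (i + j) (leq_ltn_trans (leq0n i) (ltn_ord i))).

Definition chi_b (F : fieldType) (L b : nat) (x : 'rV[F]_L) : {set 'I_L} :=
  [set i : 'I_L | [exists j : 'I_b, x 0 (cyc_idx i j) != 0]].

Definition w_b (F : fieldType) (L b : nat) (x : 'rV[F]_L) : nat := #|chi_b b x|.

(* The default
   value L is an upper bound of every weight, so this is the true minimum
   whenever C has a nonzero codeword. *)
Definition d_b (F : finFieldType) (L b : nat) (pT : predType 'rV[F]_L) (C : pT) : nat :=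
  \big[minn/L]_(c : 'rV[F]_L | (c \in C) && (c != 0)) w_b b c.

Definition bsym_MDS (F : finFieldType) (n b : nat) (C : {vspace 'rV[F]_n}) : Prop :=
  d_b b C = minn (n - \dim C + b)%N n.

Definition plus_minus_code (F : finFieldType) (n : nat)
  (C1 C2 : {vspace 'rV[F]_n}) : {set 'rV[F]_(n + n)} :=
  [set row_mx (u + v) (u - v) | u in C1, v in C2].

From HB Require Import structures.
From mathcomp Require Import all_boot all_order all_algebra all_field.
From mathcomp Require Import zify ring.
Set Implicit Arguments. Unset Strict Implicit. Unset Printing Implicit Defensive.
Import GRing.Theory.

(* Write c = [u + v, u - v].  Since 2 is invertible, a window of u or v is
   nonzero iff the corresponding window of u + v or of u - v is; and the window
   of c starting at i or at n + i covers exactly those two windows.  Folding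
   the positions of c modulo n thus maps chi_b(c) onto chi_b(u) U chi_b(v),
   giving w_b(c) >= max (w_b u, w_b v) >= d_b(C1).  Conversely C has
   q^(k1 + k2) codewords, so by pigeonhole some nonzero codeword vanishes on
   its first k1 + k2 - 1 coordinates; at most 2n - (k1 + k2 - b) of its
   windows are then nonzero, which is d_b(C1) + d_b(C2) - b for MDS codes. *)

Local Open Scope ring_scope.

Lemma odd_card_two_neq0 (F : finFieldType) : odd #|F| -> 2%:R != 0 :> F.
Proof.
apply: contraL => /eqP two0.
have char2 : 2%N \in [pchar F] by rewrite inE /= two0.
have := card_pprimeChar char2; move: (logn _ _) => [|k] /= cardF.
  by have := finNzRing_gt1 F; rewrite cardF.
by rewrite cardF expnS oddM.
Qed.

Lemma addr_subr_eq0 (F : fieldType) (V : lmodType F) (x y : V) :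
  2%:R != 0 :> F -> (x + y == 0) && (x - y == 0) = (x == 0) && (y == 0).
Proof.
move=> two_neq0; apply/andP/andP => [[/eqP xy0 /eqP xy0']|[/eqP-> /eqP->]];
  last by rewrite addr0 subr0.
have twox : 2%:R *: x = (x + y) + (x - y) by rewrite scaler_nat mulr2n addrACA subrr addr0.
have : 2%:R *: x == 0 by rewrite twox xy0 xy0' addr0.
rewrite scaler_eq0 (negPf two_neq0) => /eqP x0.
by move: xy0; rewrite x0 add0r => ->.
Qed.

(* The two halves are exchanged exactly when i + j wraps past n. *)
Lemma cyc_idx_shift n (i : 'I_n) (j : nat) : (j < n)%N ->
  let k := cyc_idx i j in
  cyc_idx (lshift n i) j = lshift n k /\ cyc_idx (rshift n i) j = rshift n k \/
  cyc_idx (lshift n i) j = rshift n k /\ cyc_idx (rshift n i) j = lshift n k.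
Proof.
move=> j_lt k; have i_lt := ltn_ord i.
case: (ltnP (i + j) n) => s_n; [left|right]; split; apply: val_inj => /=.
- by rewrite !modn_small //; lia.
- by rewrite !modn_small //; lia.
- have -> : (i + j = (i + j - n) + n)%N by lia.
  by rewrite modnDr !modn_small //; lia.
- have -> : (n + i + j = (i + j - n) + (n + n))%N by lia.
  have -> : (i + j = (i + j - n) + n)%N by lia.
  by rewrite !modnDr !modn_small //; lia.
Qed.

Lemma existsb_orb (T : finType) (P Q : pred T) :
  [exists x, P x] || [exists x, Q x] = [exists x, P x || Q x].
Proof.
apply/orP/existsP => [[/existsP[x Px]|/existsP[x Qx]]|[x /orP[Px|Qx]]].
- by exists x; rewrite Px.
- by exists x; rewrite Qx orbT.
- by left; apply/existsP; exists x.
- by right; apply/existsP; exists x.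
Qed.

Lemma in_chi_bU (F : fieldType) L b (x y : 'rV[F]_L) (i : 'I_L) :
  (i \in chi_b b x :|: chi_b b y) =
  [exists j : 'I_b, (x 0 (cyc_idx i j) != 0) || (y 0 (cyc_idx i j) != 0)].
Proof. by rewrite /chi_b !inE existsb_orb. Qed.

Lemma chi_bU_addr_subr (F : fieldType) L b (u v : 'rV[F]_L) : 2%:R != 0 :> F ->
  chi_b b (u + v) :|: chi_b b (u - v) = chi_b b u :|: chi_b b v.
Proof.
move=> two_neq0; apply/setP => i; rewrite !in_chi_bU; apply: eq_existsb => j.
by rewrite !mxE -!negb_and (@addr_subr_eq0 F F^o).
Qed.

Lemma chi_b_row_mx (F : fieldType) n b (x y : 'rV[F]_n) (i : 'I_n) : (b <= n)%N ->
  (lshift n i \in chi_b b (row_mx x y)) || (rshift n i \in chi_b b (row_mx x y)) =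
  (i \in chi_b b x :|: chi_b b y).
Proof.
move=> b_le_n; rewrite in_chi_bU /chi_b !inE existsb_orb; apply: eq_existsb => j.
have [[-> ->]|[-> ->]] := cyc_idx_shift i (leq_trans (ltn_ord j) b_le_n).
  by rewrite row_mxEl row_mxEr.
by rewrite row_mxEl row_mxEr orbC.
Qed.

Lemma card_chi_bU_le (F : fieldType) n b (x y : 'rV[F]_n) : (b <= n)%N ->
  (#|chi_b b x :|: chi_b b y| <= w_b b (row_mx x y))%N.
Proof.
move=> b_le_n.
pose fold (p : 'I_(n + n)) : 'I_n := match split p with inl k | inr k => k end.
have sub : chi_b b x :|: chi_b b y \subset fold @: chi_b b (row_mx x y).
  apply/subsetP => i; rewrite -chi_b_row_mx // => /orP[il|ir]; apply/imsetP.
    by exists (lshift n i) => //; rewrite /fold -[lshift n i]/(unsplit (inl i)) unsplitK.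
  by exists (rshift n i) => //; rewrite /fold -[rshift n i]/(unsplit (inr i)) unsplitK.
exact: leq_trans (subset_leq_card sub) (leq_imset_card _ _).
Qed.

Definition plus_minus (F : fieldType) n (u v : 'rV[F]_n) : 'rV[F]_(n + n) :=
  row_mx (u + v) (u - v).

Lemma plus_minusB (F : fieldType) n (u v u' v' : 'rV[F]_n) :
  plus_minus (u - u') (v - v') = plus_minus u v - plus_minus u' v'.
Proof.
by apply/matrixP => i j; rewrite !mxE; case: splitP => k _; rewrite !mxE; ring.
Qed.

Lemma plus_minus_eq0 (F : fieldType) n (u v : 'rV[F]_n) : 2%:R != 0 :> F ->
  (plus_minus u v == 0) = (u == 0) && (v == 0).
Proof. by move=> two_neq0; rewrite row_mx_eq0 addr_subr_eq0. Qed.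

Lemma plus_minus_inj (F : fieldType) n : 2%:R != 0 :> F ->
  injective (fun uv : 'rV[F]_n * 'rV[F]_n => plus_minus uv.1 uv.2).
Proof.
move=> two_neq0 [u v] [u' v'] /= /eqP; rewrite -subr_eq0 -plus_minusB plus_minus_eq0 //.
by rewrite !subr_eq0 => /andP[/eqP-> /eqP->].
Qed.

Lemma w_b_plus_minus (F : fieldType) n b (u v : 'rV[F]_n) :
  2%:R != 0 :> F -> (b <= n)%N ->
  (maxn (w_b b u) (w_b b v) <= w_b b (plus_minus u v))%N.
Proof.
move=> two_neq0 b_le_n; apply: leq_trans (card_chi_bU_le _ _ b_le_n).
by rewrite chi_bU_addr_subr // geq_max !subset_leq_card ?subsetUl ?subsetUr.
Qed.

Lemma d_b_le_w_b (F : finFieldType) L b (pT : predType 'rV[F]_L) (C : pT) c :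
  c \in C -> c != 0 -> (d_b b C <= w_b b c)%N.
Proof.
move=> cC c_neq0; rewrite /d_b.
elim: (index_enum _) (mem_index_enum c) => //= a r IHr.
rewrite in_cons big_cons => /orP[/eqP <-|c_in_r]; first by rewrite cC c_neq0 geq_minl.
by case: ifP => _; [apply: leq_trans (geq_minr _ _) (IHr c_in_r)|apply: IHr].
Qed.

Lemma leq_d_b (F : finFieldType) L b (pT : predType 'rV[F]_L) (C : pT) m :
  (m <= L)%N -> (forall c, c \in C -> c != 0 -> (m <= w_b b c)%N) ->
  (m <= d_b b C)%N.
Proof.
move=> mL m_le_w; apply: (big_ind (fun d => m <= d)%N) => // [d d' md md'|c /andP[]].
  by rewrite leq_min md md'.
exact: m_le_w.
Qed.

(* A window starting before m - (b - 1) lies inside the zero prefix. *)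
Lemma w_b_prefix0 (F : fieldType) L b m (c : 'rV[F]_L) : (m <= L)%N ->
  (forall p : 'I_L, (p < m)%N -> c 0 p = 0) -> (w_b b c + (m - b.-1) <= L)%N.
Proof.
move=> mL c_prefix0.
pose Z := [set widen_ord (leq_trans (leq_subr b.-1 m) mL) j | j : 'I_(m - b.-1)].
have chi_sub : chi_b b c \subset ~: Z.
  apply/subsetP => i; rewrite !inE; apply: contraL => /imsetP[j _ ->].
  rewrite negb_exists; apply/forallP => k; rewrite negbK; apply/eqP/c_prefix0 => /=.
  by apply: leq_ltn_trans (leq_mod _ _) _; have := ltn_ord j; have := ltn_ord k; lia.
have cardZ : #|Z| = (m - b.-1)%N.
  by rewrite card_imset ?card_ord // => x y /(congr1 val) /= /val_inj.
by rewrite -cardZ -[X in (_ <= X)%N]card_ord -(cardsC Z) addnC leq_add2l subset_leq_card.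
Qed.

Lemma exists_prefix0 (F : finFieldType) L m (S : {set 'rV[F]_L}) : (m <= L)%N ->
  {in S &, forall x y, x - y \in S} -> (#|F| ^ m < #|S|)%N ->
  exists c, [/\ c \in S, c != 0 & forall p : 'I_L, (p < m)%N -> c 0 p = 0].
Proof.
move=> mL subS cardS.
pose prefix (c : 'rV[F]_L) : {ffun 'I_m -> F} := [ffun j => c 0 (widen_ord mL j)].
have /dinjectivePn[x xS [y /andP[y_neq_x yS] prefix_xy]] : ~~ dinjectiveb prefix S.
  apply: contraTN cardS => /dinjectiveP prefix_inj; rewrite -leqNgt -(card_in_imset prefix_inj).
  by apply: leq_trans (max_card _) _; rewrite card_ffun card_ord.
exists (x - y); split; [exact: subS | by rewrite subr_eq0 eq_sym |].
move=> p p_lt_m; move/ffunP/(_ (Ordinal p_lt_m)): prefix_xy; rewrite !ffunE.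
have -> : widen_ord mL (Ordinal p_lt_m) = p by apply: val_inj.
by rewrite !mxE => ->; rewrite subrr.
Qed.

Lemma plus_minus_codeB (F : finFieldType) n (C1 C2 : {vspace 'rV[F]_n}) :
  {in plus_minus_code C1 C2 &, forall x y, x - y \in plus_minus_code C1 C2}.
Proof.
move=> _ _ /imset2P[u v uC1 vC2 ->] /imset2P[u' v' u'C1 v'C2 ->].
by have := plus_minusB u v u' v'; rewrite /plus_minus => <-; apply: imset2_f; rewrite memvB.
Qed.

Lemma card_plus_minus_code (F : finFieldType) n (C1 C2 : {vspace 'rV[F]_n}) :
  2%:R != 0 :> F -> #|plus_minus_code C1 C2| = (#|F| ^ (\dim C1 + \dim C2))%N.
Proof.
move=> two_neq0.
have -> : plus_minus_code C1 C2 =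
    [set plus_minus uv.1 uv.2 | uv in setX [set u in C1] [set v in C2]].
  apply/setP => c; apply/imset2P/imsetP => [[u v uC1 vC2 ->]|[[u v]]].
    by exists (u, v); rewrite // inE /= !inE uC1 vC2.
  by rewrite inE /= !inE => /andP[uC1 vC2] ->; exists u v.
by rewrite (card_imset _ (plus_minus_inj two_neq0)) cardsX !cardsE !card_vspace expnD.
Qed.

Lemma dimv_row_leq (F : fieldType) n (V : {vspace 'rV[F]_n}) : (\dim V <= n)%N.
Proof. by have := dimvS (subvf V); rewrite dimvf /dim /= mul1n. Qed.

Lemma bsym_MDS_d_b (F : finFieldType) n b (C : {vspace 'rV[F]_n}) :
  (b <= \dim C)%N -> bsym_MDS b C -> d_b b C = (n - \dim C + b)%N.
Proof.
move=> b_le_k ->; apply/minn_idPl.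
have kn : (\dim C <= n)%N := dimv_row_leq C.
lia.
Qed.

Local Close Scope ring_scope.

Theorem mainTheorem12 (F : finFieldType) (n b : nat) (C1 C2 : {vspace 'rV[F]_n}) :
  odd #|F| ->
  bsym_MDS b C1 -> bsym_MDS b C2 ->
  d_b b C1 <= d_b b C2 ->
  1 <= b -> b <= minn (\dim C1) (\dim C2) ->
  d_b b C1 <= d_b b (plus_minus_code C1 C2) <= d_b b C1 + d_b b C2 - b.
Proof.
move=> oddF MDS1 MDS2 d12 b_gt0; rewrite leq_min => /andP[b_le_k1 b_le_k2].
have two_neq0 := odd_card_two_neq0 oddF.
have k1n : \dim C1 <= n := dimv_row_leq C1.
have k2n : \dim C2 <= n := dimv_row_leq C2.
have d1E := bsym_MDS_d_b b_le_k1 MDS1; have d2E := bsym_MDS_d_b b_le_k2 MDS2.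
have b_le_n : b <= n by lia.
apply/andP; split.
  apply: leq_d_b => [|_ /imset2P[u v uC1 vC2 ->]]; first by lia.
  rewrite -/(plus_minus u v) plus_minus_eq0 // negb_and => uv_neq0.
  apply: leq_trans (w_b_plus_minus _ _ two_neq0 b_le_n); rewrite leq_max.
  case/orP: uv_neq0 => [u_neq0|v_neq0]; apply/orP; [left|right].
    exact: d_b_le_w_b.
  exact: leq_trans d12 (d_b_le_w_b _ vC2 v_neq0).
set m := (\dim C1 + \dim C2).-1.
have m_le_2n : m <= n + n by lia.
have [|c [cC c_neq0 c_prefix0]] := exists_prefix0 m_le_2n (@plus_minus_codeB F n C1 C2).
  by rewrite card_plus_minus_code // ltn_exp2l ?finNzRing_gt1 //; lia.
have := w_b_prefix0 b m_le_2n c_prefix0; have := d_b_le_w_b b cC c_neq0.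
by rewrite d1E d2E /m; lia.
Qed.
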